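(* Let $\mathcal C$ be a Markov category that has conditionals and precise supports. Then the relation $\sim$ on states $I \leadsto X$ of $\mathrm{Obs}(\mathcal C)$ is a functorial equivalence relation. That is, it is an equivalence relation, and for all states $(K,\psi,o),(K',\psi',o') : I\leadsto X$ with $(K,\psi,o)\sim(K',\psi',o')$ and every morphism $(H,f,v):X\leadsto Y$ of $\mathrm{Obs}(\mathcal C)$ we have \[(H\otimes K,(f\otimes \mathrm{id}_K)\psi, v\otimes o)\ \sim\ (H\otimes K',(f\otimes\mathrm{id}_{K'})\psi', v\otimes o').\]
   Context: A Markov category is a symmetric monoidal category $(\mathcal C,\otimes,I)$ (assumed strict monoidal) in which every object $X$ carries a commutative comonoid $\mathrm{copy}_X:X\to X\otimes X$, $\mathrm{del}_X:X\to I$, compatible with $\otimes$ (i.e. $\mathrm{copy}_{X\otimes Y}$, $\mathrm{del}_{X\otimes Y}$ are obtained from those of $X$ and $Y$ using the symmetry), and in which $I$ is terminal. Write $gf$ for $g\circ f$. A morphism $f:X\to Y$ is deterministic if $\mathrm{copy}_Y f=(f\otimes f)\mathrm{copy}_X$. For $f:A\to X$, $g:A\to Y$ put $\langle f,g\rangle=(f\otimes g)\mathrm{copy}_A$. For $f:A\to X\otimes Y$ the marginals are $f_X=(\mathrm{id}_X\otimes\mathrm{del}_Y)f$ and $f_Y=(\mathrm{del}_X\otimes \mathrm{id}_Y)f$. A state is a morphism $I\to X$. A conditional of $f:A\to X\otimes Y$ with respect to $X$ is a morphism $f|_X:X\otimes A\to Y$ with $f=(\mathrm{id}_X\otimes f|_X)(\mathrm{copy}_X\otimes\mathrm{id}_A)(f_X\otimes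 \mathrm{id}_A)\mathrm{copy}_A$ (for a state $\psi:I\to X\otimes Y$: $\psi=\langle\mathrm{id}_X,\psi|_X\rangle\psi_X$); conditionals with respect to $Y$ are defined symmetrically; $\mathcal C$ has conditionals if all such conditionals exist. For a state $\mu:I\to X$ and $f,g:X\to Y$, write $f=_\mu g$ if $\langle\mathrm{id}_X,f\rangle\mu=\langle\mathrm{id}_X,g\rangle\mu$. For states $\mu,\nu:I\to X$, $\mu\ll\nu$ means: for all $Y$ and all $f,g:X\to Y$, $f=_\nu g$ implies $f=_\mu g$. $\mathcal C$ has precise supports if for all deterministic $x:I\to X$, $y:I\to Y$, all $f:X\to Y$ and all $\mu:I\to X$: $x\otimes y\ll\langle\mathrm{id}_X,f\rangle\mu$ iff ($x\ll\mu$ and $y\ll fx$). The category $\mathrm{Obs}(\mathcal C)$ has the objects of $\mathcal C$; a morphism $X\leadsto Y$ is a triple $(K,f,o)$ with $K$ an object, $f:X\to Y\otimes K$ in $\mathcal C$ and $o:I\to K$ deterministic; identities are $(I,\mathrm{id}_X,\mathrm{id}_I)$; composition is $(K',f',o')\bullet(K,f,o)=(K'\otimes K,(f'\otimes\mathrm{id}_K)f,o'\otimes o)$; the tensor of $(K,f,o):X\leadsto Y$ and $(K',f',o'):X'\leadsto Y'$ is $(K'\otimes K,(\mathrm{id}_{Y'}\otimes\mathrm{swap}_{K',Y}\otimes \mathrm{id}_K)(f'\otimes f),o'\otimes o)$ (order of factors as written). A state $(K,\psi,o):I\leadsto X$ (so $\psi:I\to X\otimes K$) is an inference problem; it succeeds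 if $o\ll\psi_K$, in which case its posterior is $\psi|_K\, o:I\to X$, where $\psi|_K:K\to X$ is a conditional of $\psi$ with respect to $K$. Define $(K,\psi,o)\sim(K',\psi',o')$ iff either ($o\ll\psi_K$, $o'\ll\psi'_{K'}$ and $\psi|_K o=\psi'|_{K'}o'$) or ($o\not\ll\psi_K$ and $o'\not\ll\psi'_{K'}$). *)

(** Strictness is expressed by propositional equalities of objects
    [tens_assoc], [tens_unitl], [tens_unitr]; morphisms are transported along
    them with [cast] (an identity morphism up to transport). *)
Record MarkovData := {
  ob : Type;
  hom : ob -> ob -> Type;
  idm : forall X, hom X X;
  comp : forall X Y Z, hom Y Z -> hom X Y -> hom X Z;
  tens : ob -> ob -> ob;
  unit : ob;
  tensm : forall X Y X' Y', hom X Y -> hom X' Y' -> hom (tens X X') (tens Y Y');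
  tens_assoc : forall X Y Z, tens (tens X Y) Z = tens X (tens Y Z);
  tens_unitl : forall X, tens unit X = X;
  tens_unitr : forall X, tens X unit = X;
  swap : forall X Y, hom (tens X Y) (tens Y X);
  copy : forall X, hom X (tens X X);
  del : forall X, hom X unit }.

Arguments hom {m} _ _.
Arguments idm {m} X.
Arguments comp {m X Y Z} _ _.
Arguments tens {m} _ _.
Arguments unit {m}.
Arguments tensm {m X Y X' Y'} _ _.
Arguments tens_assoc {m} X Y Z.
Arguments tens_unitl {m} X.
Arguments tens_unitr {m} X.
Arguments swap {m} X Y.
Arguments copy {m} X.
Arguments del {m} X.

Definition cast {C : MarkovData} {X Y : ob C} (e : X = Y) : hom X Y :=
  match e in _ = Z return hom X Z with eq_refl => idm X end.

Declare Scope markov_scope.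
Delimit Scope markov_scope with MK.
Open Scope markov_scope.
Notation "g ∘ f" := (comp g f) (at level 40, left associativity) : markov_scope.
Notation "f ⊗ g" := (tensm f g) (at level 34, left associativity) : markov_scope.

Record MarkovAxioms (C : MarkovData) : Prop := {
  comp_idl : forall (X Y : ob C) (f : hom X Y), idm Y ∘ f = f;
  comp_idr : forall (X Y : ob C) (f : hom X Y), f ∘ idm X = f;
  comp_assoc : forall (X Y Z W : ob C) (f : hom X Y) (g : hom Y Z) (h : hom Z W),
      h ∘ (g ∘ f) = (h ∘ g) ∘ f;
  tensm_id : forall (X Y : ob C), idm X ⊗ idm Y = idm (tens X Y);
  tensm_comp : forall (X Y Z X' Y' Z' : ob C) (f : hom X Y) (g : hom Y Z)
      (f' : hom X' Y') (g' : hom Y' Z'), (g ∘ f) ⊗ (g' ∘ f') = (g ⊗ g') ∘ (f ⊗ f');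
  tensm_assoc : forall (X Y Z X' Y' Z' : ob C) (f : hom X X') (g : hom Y Y') (h : hom Z Z'),
      cast (tens_assoc X' Y' Z') ∘ ((f ⊗ g) ⊗ h) = (f ⊗ (g ⊗ h)) ∘ cast (tens_assoc X Y Z);
  tensm_unitl : forall (X Y : ob C) (f : hom X Y),
      cast (tens_unitl Y) ∘ (idm unit ⊗ f) = f ∘ cast (tens_unitl X);
  tensm_unitr : forall (X Y : ob C) (f : hom X Y),
      cast (tens_unitr Y) ∘ (f ⊗ idm unit) = f ∘ cast (tens_unitr X);
  swap_nat : forall (X Y X' Y' : ob C) (f : hom X X') (g : hom Y Y'),
      swap X' Y' ∘ (f ⊗ g) = (g ⊗ f) ∘ swap X Y;
  swap_inv : forall (X Y : ob C), swap Y X ∘ swap X Y = idm (tens X Y);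
  swap_hex : forall (X Y Z : ob C),
      swap X (tens Y Z) =
        cast (eq_sym (tens_assoc Y Z X)) ∘ (idm Y ⊗ swap X Z)
        ∘ cast (tens_assoc Y X Z) ∘ (swap X Y ⊗ idm Z) ∘ cast (eq_sym (tens_assoc X Y Z));
  swap_unit : forall (X : ob C),
      cast (tens_unitl X) ∘ swap X unit = cast (tens_unitr X);
  copy_counitl : forall (X : ob C), cast (tens_unitl X) ∘ (del X ⊗ idm X) ∘ copy X = idm X;
  copy_counitr : forall (X : ob C), cast (tens_unitr X) ∘ (idm X ⊗ del X) ∘ copy X = idm X;
  copy_coassoc : forall (X : ob C),
      cast (tens_assoc X X X) ∘ (copy X ⊗ idm X) ∘ copy X = (idm X ⊗ copy X) ∘ copy X;
  copy_comm : forall (X : ob C), swap X X ∘ copy X = copy X;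
  copy_tens : forall (X Y : ob C),
      copy (tens X Y) =
        cast (eq_trans (f_equal (tens X) (tens_assoc Y X Y))
                       (eq_sym (tens_assoc X Y (tens X Y))))
        ∘ (idm X ⊗ (swap X Y ⊗ idm Y))
        ∘ cast (eq_trans (tens_assoc X X (tens Y Y))
                         (f_equal (tens X) (eq_sym (tens_assoc X Y Y))))
        ∘ (copy X ⊗ copy Y);
  del_tens : forall (X Y : ob C),
      del (tens X Y) = cast (tens_unitl unit) ∘ (del X ⊗ del Y);
  unit_terminal : forall (X : ob C) (f g : hom X unit), f = g }.

Section Defs.
Context {C : MarkovData}.

Definition deterministic {X Y : ob C} (f : hom X Y) : Prop :=
  copy Y ∘ f = (f ⊗ f) ∘ copy X.

Definition pairing {A X Y : ob C} (f : hom A X) (g : hom A Y) : hom A (tens X Y) :=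
  (f ⊗ g) ∘ copy A.

Definition margX {A X Y : ob C} (f : hom A (tens X Y)) : hom A X :=
  cast (tens_unitr X) ∘ (idm X ⊗ del Y) ∘ f.
Definition margY {A X Y : ob C} (f : hom A (tens X Y)) : hom A Y :=
  cast (tens_unitl Y) ∘ (del X ⊗ idm Y) ∘ f.

Definition is_condX {A X Y : ob C} (f : hom A (tens X Y)) (c : hom (tens X A) Y) : Prop :=
  f = (idm X ⊗ c) ∘ cast (tens_assoc X X A) ∘ (copy X ⊗ idm A) ∘ (margX f ⊗ idm A) ∘ copy A.

Definition is_condY {A X Y : ob C} (f : hom A (tens X Y)) (c : hom (tens Y A) X) : Prop :=
  is_condX (swap X Y ∘ f) c.

Definition stens {X Y : ob C} (x : hom unit X) (y : hom unit Y) : hom unit (tens X Y) :=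
  (x ⊗ y) ∘ cast (eq_sym (tens_unitl unit)).

Definition as_eq {X Y : ob C} (mu : hom unit X) (f g : hom X Y) : Prop :=
  pairing (idm X) f ∘ mu = pairing (idm X) g ∘ mu.

Definition abs_cont {X : ob C} (mu nu : hom unit X) : Prop :=
  forall (Y : ob C) (f g : hom X Y), as_eq nu f g -> as_eq mu f g.

(** Morphisms X ~> Y of Obs(C): triples (K, f, o); determinism of o is the
    separate predicate [obs_valid]. *)
Record ObsHom (X Y : ob C) := {
  okey : ob C;
  omap : hom X (tens Y okey);
  oobs : hom unit okey }.

Arguments okey {X Y} _.
Arguments omap {X Y} _.
Arguments oobs {X Y} _.

Definition obs_valid {X Y : ob C} (m : ObsHom X Y) : Prop := deterministic (oobs m).

Definition obs_comp {X Y Z : ob C} (m' : ObsHom Y Z) (m : ObsHom X Y) : ObsHom X Z :=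
  {| okey := tens (okey m') (okey m);
     omap := cast (tens_assoc Z (okey m') (okey m)) ∘ (omap m' ⊗ idm (okey m)) ∘ omap m;
     oobs := stens (oobs m') (oobs m) |}.

Definition succeeds {X : ob C} (s : ObsHom unit X) : Prop :=
  abs_cont (oobs s) (margY (omap s)).

(** posterior psi|_K o, for a conditional c : K ⊗ I -> X of psi w.r.t. K *)
Definition posterior {X : ob C} (s : ObsHom unit X) (c : hom (tens (okey s) unit) X)
  : hom unit X :=
  c ∘ cast (eq_sym (tens_unitr (okey s))) ∘ oobs s.

Definition obs_sim {X : ob C} (s t : ObsHom unit X) : Prop :=
  (succeeds s /\ succeeds t /\
     forall (c : hom (tens (okey s) unit) X) (c' : hom (tens (okey t) unit) X),
       is_condY (omap s) c -> is_condY (omap t) c' -> posterior s c = posterior t c')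
  \/ (~ succeeds s /\ ~ succeeds t).

End Defs.

Arguments okey {C X Y} _.
Arguments omap {C X Y} _.
Arguments oobs {C X Y} _.

Definition has_conditionals (C : MarkovData) : Prop :=
  (forall (A X Y : ob C) (f : hom A (tens X Y)), exists c, is_condX f c) /\
  (forall (A X Y : ob C) (f : hom A (tens X Y)), exists c, is_condY f c).

Definition precise_supports (C : MarkovData) : Prop :=
  forall (X Y : ob C) (x : hom unit X) (y : hom unit Y) (f : hom X Y) (mu : hom unit X),
    deterministic x -> deterministic y ->
    (abs_cont (stens x y) (pairing (idm X) f ∘ mu) <-> (abs_cont x mu /\ abs_cont y (f ∘ x))).

(* If s = (K, ψ, o) succeeds and c is a conditional of ψ with respect to K, then
   ψ = ⟨c, id⟩ ψ_K, and a conditional e of f c with respect to H is also a conditional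
   of (f ⊗ id) ψ with respect to H ⊗ K.  Precise supports split the success condition
   v ⊗ o ≪ ⟨(f c)_H, id⟩ ψ_K of m • s into o ≪ ψ_K and v ≪ (f c o)_H, and the almost
   sure uniqueness of conditionals identifies the posterior of m • s with that of
   (H, f p, v), where p = c o is the posterior of s.  So m • s ∼ (H, f p, v), which
   depends on s only through p; functoriality then follows from transitivity. *)

From Stdlib Require Import ProofIrrelevance Classical.

Section Markov.
Context {C : MarkovData} (HC : MarkovAxioms C).

Lemma id_l {X Y : ob C} (f : hom X Y) : idm Y ∘ f = f.
Proof. exact (comp_idl _ HC X Y f). Qed.
Lemma id_r {X Y : ob C} (f : hom X Y) : f ∘ idm X = f.
Proof. exact (comp_idr _ HC X Y f). Qed.
Lemma compA {X Y Z W : ob C} (f : hom X Y) (g : hom Y Z) (h : hom Z W) :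
  h ∘ (g ∘ f) = (h ∘ g) ∘ f.
Proof. exact (comp_assoc _ HC X Y Z W f g h). Qed.
Lemma tens_idm (X Y : ob C) : idm X ⊗ idm Y = idm (tens X Y).
Proof. exact (tensm_id _ HC X Y). Qed.
Lemma tens_interchange {X Y Z X' Y' Z' : ob C}
  (f : hom X Y) (g : hom Y Z) (f' : hom X' Y') (g' : hom Y' Z') :
  (g ∘ f) ⊗ (g' ∘ f') = (g ⊗ g') ∘ (f ⊗ f').
Proof. exact (tensm_comp _ HC X Y Z X' Y' Z' f g f' g'). Qed.
Lemma swap_natural {X Y X' Y' : ob C} (f : hom X X') (g : hom Y Y') :
  swap X' Y' ∘ (f ⊗ g) = (g ⊗ f) ∘ swap X Y.
Proof. exact (swap_nat _ HC X Y X' Y' f g). Qed.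
Lemma swap_swap (X Y : ob C) : swap Y X ∘ swap X Y = idm (tens X Y).
Proof. exact (swap_inv _ HC X Y). Qed.
Lemma swap_copy (X : ob C) : swap X X ∘ copy X = copy X.
Proof. exact (copy_comm _ HC X). Qed.
Lemma to_unit_unique {X : ob C} (f g : hom X unit) : f = g.
Proof. exact (unit_terminal _ HC X f g). Qed.

Lemma cast_irrelevance {X Y : ob C} (e e' : X = Y) : cast e = cast e'.
Proof. now rewrite (proof_irrelevance _ e e'). Qed.
Lemma cast_idm {X : ob C} (e : X = X) : cast e = idm X.
Proof. now rewrite (proof_irrelevance _ e eq_refl). Qed.
Lemma cast_comp {X Y Z : ob C} (e1 : X = Y) (e2 : Y = Z) :
  cast e2 ∘ cast e1 = cast (eq_trans e1 e2).
Proof. destruct e2. apply id_l. Qed.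
Lemma cast_tens {X Y X' Y' : ob C} (e : X = X') (e' : Y = Y') :
  cast e ⊗ cast e' = cast (f_equal2 tens e e').
Proof. destruct e, e'. rewrite !cast_idm. apply tens_idm. Qed.
Lemma cast_move_l {X Y Z : ob C} (e : Y = Z) (f : hom X Y) (g : hom X Z) :
  cast e ∘ f = g -> f = cast (eq_sym e) ∘ g.
Proof. intros <-. now rewrite compA, cast_comp, cast_idm, id_l. Qed.

(* Strictness of ⊗ holds only up to the propositional equalities [tens_assoc], ...;
   [heq] compares morphisms whose (co)domains agree up to such equalities. *)
Definition heq {A B A' B' : ob C} (f : hom A B) (f' : hom A' B') : Prop :=
  exists (e0 : A = A') (e1 : B = B'), cast e1 ∘ f = f' ∘ cast e0.

Lemma heqE {A B A' B' : ob C} (f : hom A B) (f' : hom A' B') :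
  heq f f' -> forall (e0 : A = A') (e1 : B = B'), cast e1 ∘ f = f' ∘ cast e0.
Proof.
  intros [d0 [d1 H]] e0 e1.
  now rewrite (cast_irrelevance e0 d0), (cast_irrelevance e1 d1).
Qed.
Lemma heq_eq {A B : ob C} (f f' : hom A B) : heq f f' -> f = f'.
Proof.
  intros H. pose proof (heqE _ _ H eq_refl eq_refl) as E. cbn in E.
  now rewrite id_l, id_r in E.
Qed.
Lemma heq_refl {A B : ob C} (f : hom A B) : heq f f.
Proof. exists eq_refl, eq_refl. cbn. now rewrite id_l, id_r. Qed.

Ltac heq_unfold :=
  repeat match goal with
  | H : heq _ _ |- _ => let e0 := fresh "e" in let e1 := fresh "e" in
      destruct H as [e0 [e1 H]]; destruct e0, e1; cbn in H; rewrite id_l, id_r in H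
  end; exists eq_refl, eq_refl; cbn; rewrite id_l, id_r.

Lemma heq_sym {A B A' B' : ob C} (f : hom A B) (f' : hom A' B') : heq f f' -> heq f' f.
Proof. intros H. heq_unfold. now symmetry. Qed.
Lemma heq_trans {A B A' B' A'' B'' : ob C}
  (f : hom A B) (f' : hom A' B') (f'' : hom A'' B'') :
  heq f f' -> heq f' f'' -> heq f f''.
Proof. intros H H'. heq_unfold. now rewrite H. Qed.
Lemma heq_comp {A B D A' B' D' : ob C}
  (f : hom A B) (g : hom B D) (f' : hom A' B') (g' : hom B' D') :
  heq f f' -> heq g g' -> heq (g ∘ f) (g' ∘ f').
Proof.
  intros [e0 [e1 H]] [d0 [d1 H']]. destruct e0, e1, d1.
  rewrite (proof_irrelevance _ d0 eq_refl) in H'. cbn in H, H'.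
  rewrite id_l, id_r in H. rewrite id_l, id_r in H'.
  exists eq_refl, eq_refl. cbn. now rewrite id_l, id_r, H, H'.
Qed.
Lemma heq_tens {A B A' B' P Q P' Q' : ob C}
  (f : hom A B) (f' : hom A' B') (g : hom P Q) (g' : hom P' Q') :
  heq f f' -> heq g g' -> heq (f ⊗ g) (f' ⊗ g').
Proof. intros H H'. heq_unfold. now rewrite H, H'. Qed.
Lemma heq_cast_l {A B D A' B' : ob C} (f : hom A B) (e : B = D) (f' : hom A' B') :
  heq f f' -> heq (cast e ∘ f) f'.
Proof.
  intros [e0 [e1 H]]. destruct e, e0, e1. exists eq_refl, eq_refl. cbn in *.
  rewrite !id_l, id_r in *. exact H.
Qed.
Lemma heq_cast_r {A B D A' B' : ob C} (f : hom B D) (e : A = B) (f' : hom A' B') :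
  heq f f' -> heq (f ∘ cast e) f'.
Proof.
  intros [e0 [e1 H]]. destruct e, e0, e1. exists eq_refl, eq_refl. cbn in *.
  rewrite !id_r, id_l in *. exact H.
Qed.
Lemma heq_of_cast {A B B' : ob C} (e : B = B') (f : hom A B) (g : hom A B') :
  cast e ∘ f = g -> heq f g.
Proof. intros H. exists eq_refl, e. cbn. now rewrite id_r. Qed.
Lemma heq_tens_assoc {X Y Z X' Y' Z' : ob C} (f : hom X X') (g : hom Y Y') (h : hom Z Z') :
  heq ((f ⊗ g) ⊗ h) (f ⊗ (g ⊗ h)).
Proof. eexists _, _. exact (tensm_assoc _ HC _ _ _ _ _ _ f g h). Qed.
Lemma heq_tens_unitl {X Y : ob C} (f : hom X Y) : heq (idm unit ⊗ f) f.
Proof. eexists _, _. exact (tensm_unitl _ HC _ _ f). Qed.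
Lemma heq_tens_unitr {X Y : ob C} (f : hom X Y) : heq (f ⊗ idm unit) f.
Proof. eexists _, _. exact (tensm_unitr _ HC _ _ f). Qed.

Definition fstm {X Y : ob C} : hom (tens X Y) X := cast (tens_unitr X) ∘ (idm X ⊗ del Y).
Definition sndm {X Y : ob C} : hom (tens X Y) Y := cast (tens_unitl Y) ∘ (del X ⊗ idm Y).

Lemma to_unit_unit_unique {X : ob C} (f g : hom X (tens unit unit)) : f = g.
Proof.
  rewrite (cast_move_l (tens_unitl unit) f _ eq_refl),
          (cast_move_l (tens_unitl unit) g _ eq_refl).
  f_equal. apply to_unit_unique.
Qed.
Lemma copy_unit : copy (@unit C) = cast (eq_sym (tens_unitl unit)).
Proof. apply to_unit_unit_unique. Qed.
Lemma swap_unit_unit : swap (@unit C) unit = idm _.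
Proof. apply to_unit_unit_unique. Qed.
Lemma swap_unit_l (Y : ob C) : cast (tens_unitr Y) ∘ swap unit Y = cast (tens_unitl Y).
Proof. now rewrite <- (swap_unit _ HC Y), <- compA, swap_swap, id_r. Qed.

Lemma fstm_tens {X Y X' Y' : ob C} (f : hom X X') (g : hom Y Y') : fstm ∘ (f ⊗ g) = f ∘ fstm.
Proof.
  unfold fstm. rewrite <- compA, <- tens_interchange, id_l.
  rewrite (to_unit_unique (del Y' ∘ g) (del Y)).
  replace (f ⊗ del Y) with ((f ⊗ idm unit) ∘ (idm X ⊗ del Y))
    by now rewrite <- tens_interchange, id_l, id_r.
  now rewrite compA, (tensm_unitr _ HC), <- compA.
Qed.
Lemma sndm_tens {X Y X' Y' : ob C} (f : hom X X') (g : hom Y Y') : sndm ∘ (f ⊗ g) = g ∘ sndm.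
Proof.
  unfold sndm. rewrite <- compA, <- tens_interchange, id_l.
  rewrite (to_unit_unique (del X' ∘ f) (del X)).
  replace (del X ⊗ g) with ((idm unit ⊗ g) ∘ (del X ⊗ idm Y))
    by now rewrite <- tens_interchange, id_l, id_r.
  now rewrite compA, (tensm_unitl _ HC), <- compA.
Qed.
Lemma fstm_copy (X : ob C) : fstm ∘ copy X = idm X.
Proof. exact (copy_counitr _ HC X). Qed.
Lemma sndm_copy (X : ob C) : sndm ∘ copy X = idm X.
Proof. exact (copy_counitl _ HC X). Qed.
Lemma fstm_swap (X Y : ob C) : fstm ∘ swap X Y = sndm.
Proof.
  unfold fstm, sndm.
  now rewrite <- compA, <- (swap_natural (del X) (idm Y)), compA, swap_unit_l.
Qed.

Lemma tens_pairing {A X Y X' Y' : ob C} (f : hom A X) (g : hom A Y) (a : hom X X') (b : hom Y Y') :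
  (a ⊗ b) ∘ pairing f g = pairing (a ∘ f) (b ∘ g).
Proof. unfold pairing. now rewrite compA, <- tens_interchange. Qed.
Lemma pairing_det {B A X Y : ob C} (f : hom A X) (g : hom A Y) (h : hom B A) :
  deterministic h -> pairing f g ∘ h = pairing (f ∘ h) (g ∘ h).
Proof.
  unfold pairing, deterministic. intros Hh.
  now rewrite <- compA, Hh, compA, <- tens_interchange.
Qed.
Lemma swap_pairing {A X Y : ob C} (f : hom A X) (g : hom A Y) :
  swap X Y ∘ pairing f g = pairing g f.
Proof. unfold pairing. now rewrite compA, swap_natural, <- compA, swap_copy. Qed.
Lemma fstm_pairing {A X Y : ob C} (f : hom A X) (g : hom A Y) : fstm ∘ pairing f g = f.
Proof. unfold pairing. now rewrite compA, fstm_tens, <- compA, fstm_copy, id_r. Qed.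
Lemma sndm_pairing {A X Y : ob C} (f : hom A X) (g : hom A Y) : sndm ∘ pairing f g = g.
Proof. unfold pairing. now rewrite compA, sndm_tens, <- compA, sndm_copy, id_r. Qed.
Lemma pairing_idm_idm (X : ob C) : pairing (idm X) (idm X) = copy X.
Proof. unfold pairing. now rewrite tens_idm, id_l. Qed.

Lemma assoc_pairing {A X Y Z : ob C} (f : hom A X) (g : hom A Y) (h : hom A Z)
  (e : tens (tens X Y) Z = tens X (tens Y Z)) :
  cast e ∘ pairing (pairing f g) h = pairing f (pairing g h).
Proof.
  unfold pairing.
  replace (((f ⊗ g) ∘ copy A) ⊗ h) with (((f ⊗ g) ⊗ h) ∘ (copy A ⊗ idm A))
    by now rewrite <- tens_interchange, id_r.
  rewrite !compA, (heqE _ _ (heq_tens_assoc f g h) (tens_assoc A A A) e).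
  now rewrite <- !compA, (compA (copy A) (copy A ⊗ idm A)), (copy_coassoc _ HC),
    compA, <- tens_interchange, id_r.
Qed.

Lemma det_idm (X : ob C) : deterministic (idm X).
Proof. unfold deterministic. now rewrite id_r, tens_idm, id_l. Qed.
Lemma det_cast {X Y : ob C} (e : X = Y) : deterministic (cast e).
Proof. destruct e. apply det_idm. Qed.
Lemma det_comp {X Y Z : ob C} (f : hom X Y) (g : hom Y Z) :
  deterministic f -> deterministic g -> deterministic (g ∘ f).
Proof.
  unfold deterministic. intros Hf Hg.
  now rewrite compA, Hg, <- compA, Hf, compA, <- tens_interchange.
Qed.
Lemma det_del (X : ob C) : deterministic (del X).
Proof. apply to_unit_unit_unique. Qed.

Lemma idm_tens_cast {X Y Y' : ob C} (e : Y = Y') :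
  idm X ⊗ cast e = cast (f_equal (tens X) e).
Proof. destruct e. apply tens_idm. Qed.
Lemma cast_tens_idm {X X' Y : ob C} (e : X = X') :
  cast e ⊗ idm Y = cast (f_equal (fun Z => tens Z Y) e).
Proof. destruct e. apply tens_idm. Qed.

Definition shuffle (A B D E : ob C) :
  hom (tens (tens A B) (tens D E)) (tens (tens A D) (tens B E)) :=
  cast (eq_trans (f_equal (tens A) (tens_assoc D B E)) (eq_sym (tens_assoc A D (tens B E))))
  ∘ (idm A ⊗ (swap B D ⊗ idm E))
  ∘ cast (eq_trans (tens_assoc A B (tens D E)) (f_equal (tens A) (eq_sym (tens_assoc B D E)))).

Lemma copy_tens_shuffle (X Y : ob C) : copy (tens X Y) = shuffle X X Y Y ∘ (copy X ⊗ copy Y).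
Proof. exact (copy_tens _ HC X Y). Qed.

Lemma shuffle_natural {A B D E A' B' D' E' : ob C}
  (a : hom A A') (b : hom B B') (d : hom D D') (e : hom E E') :
  shuffle A' B' D' E' ∘ ((a ⊗ b) ⊗ (d ⊗ e)) = ((a ⊗ d) ⊗ (b ⊗ e)) ∘ shuffle A B D E.
Proof.
  apply heq_eq. unfold shuffle. rewrite <- !compA.
  apply heq_trans with ((idm A' ⊗ (swap B' D' ⊗ idm E')) ∘ (a ⊗ ((b ⊗ d) ⊗ e))).
  { apply heq_cast_l, heq_comp; [| apply heq_refl]. apply heq_cast_l.
    eapply heq_trans; [apply heq_tens_assoc |].
    apply heq_tens; [apply heq_refl | apply heq_sym, heq_tens_assoc]. }
  replace ((idm A' ⊗ (swap B' D' ⊗ idm E')) ∘ (a ⊗ ((b ⊗ d) ⊗ e))) with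
     ((a ⊗ ((d ⊗ b) ⊗ e)) ∘ (idm A ⊗ (swap B D ⊗ idm E)))
    by now rewrite <- !tens_interchange, !id_l, !id_r, swap_natural.
  apply heq_sym, heq_comp; [apply heq_cast_l, heq_cast_r, heq_refl |].
  eapply heq_trans; [apply heq_tens_assoc |].
  apply heq_tens; [apply heq_refl | apply heq_sym, heq_tens_assoc].
Qed.

Lemma det_copy (A : ob C) : deterministic (copy A).
Proof.
  unfold deterministic. rewrite copy_tens_shuffle.
  set (R := (idm A ⊗ ((copy A ⊗ idm A) ∘ copy A)) ∘ copy A).
  assert (coassoc : heq ((copy A ⊗ idm A) ∘ copy A) ((idm A ⊗ copy A) ∘ copy A)).
  { apply (heq_of_cast (tens_assoc A A A)). rewrite compA. exact (copy_coassoc _ HC A). }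
  assert (HR : heq ((copy A ⊗ copy A) ∘ copy A) R).
  { replace (copy A ⊗ copy A) with ((idm A ⊗ idm A ⊗ copy A) ∘ (copy A ⊗ idm A))
      by now rewrite tens_idm, <- tens_interchange, id_l, id_r.
    rewrite <- compA. unfold R.
    apply heq_trans with ((idm A ⊗ (idm A ⊗ copy A)) ∘ ((idm A ⊗ copy A) ∘ copy A)).
    { apply heq_comp; [exact coassoc | apply heq_tens_assoc]. }
    rewrite compA, <- tens_interchange, id_l.
    apply heq_comp; [apply heq_refl |].
    apply heq_tens; [apply heq_refl | apply heq_sym, coassoc]. }
  apply heq_eq. unfold shuffle. rewrite <- !compA.
  apply heq_trans with ((idm A ⊗ (swap A A ⊗ idm A)) ∘ R).
  { apply heq_cast_l, heq_comp; [apply heq_cast_l, HR | apply heq_refl]. }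
  replace ((idm A ⊗ (swap A A ⊗ idm A)) ∘ R) with R.
  - apply heq_sym, HR.
  - unfold R. now rewrite compA, <- !tens_interchange, id_l, compA, <- tens_interchange,
      swap_copy, id_l.
Qed.

Lemma det_tens {X Y X' Y' : ob C} (f : hom X X') (g : hom Y Y') :
  deterministic f -> deterministic g -> deterministic (f ⊗ g).
Proof.
  unfold deterministic. intros Hf Hg. rewrite !copy_tens_shuffle.
  now rewrite <- compA, <- tens_interchange, Hf, Hg, tens_interchange, compA,
    shuffle_natural, <- compA.
Qed.

Lemma pairing_fstm_sndm (X Y : ob C) : pairing (@fstm X Y) sndm = idm (tens X Y).
Proof.
  assert (fstm_copy' : (idm X ⊗ del X) ∘ copy X = cast (eq_sym (tens_unitr X))).
  { rewrite <- id_r. apply cast_move_l. rewrite compA. apply fstm_copy. }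
  assert (sndm_copy' : (del Y ⊗ idm Y) ∘ copy Y = cast (eq_sym (tens_unitl Y))).
  { rewrite <- id_r. apply cast_move_l. rewrite compA. apply sndm_copy. }
  unfold pairing, fstm, sndm.
  rewrite tens_interchange, copy_tens_shuffle, <- !compA,
    (compA (copy X ⊗ copy Y) (shuffle X X Y Y)), <- shuffle_natural, <- compA,
    <- tens_interchange, fstm_copy', sndm_copy'.
  unfold shuffle. rewrite swap_unit_unit.
  repeat rewrite ?id_l, ?id_r, ?tens_idm, ?cast_tens, ?idm_tens_cast, ?cast_tens_idm,
    ?cast_comp, <- ?compA.
  apply cast_idm.
Qed.

Lemma det_pairing {A X Y : ob C} (f : hom A X) (g : hom A Y) :
  deterministic f -> deterministic g -> deterministic (pairing f g).
Proof. intros. apply det_comp; [apply det_copy | now apply det_tens]. Qed.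
Lemma det_fstm (X Y : ob C) : deterministic (@fstm X Y).
Proof.
  apply det_comp; [apply det_tens; [apply det_idm | apply det_del] | apply det_cast].
Qed.
Lemma det_sndm (X Y : ob C) : deterministic (@sndm X Y).
Proof.
  apply det_comp; [apply det_tens; [apply det_del | apply det_idm] | apply det_cast].
Qed.

Lemma pairing_ext_det {A X Y : ob C} (f : hom A (tens X Y)) :
  deterministic f -> f = pairing (fstm ∘ f) (sndm ∘ f).
Proof.
  intros Hf. unfold deterministic in Hf. unfold pairing.
  rewrite tens_interchange, <- compA, <- Hf, compA.
  fold (pairing (@fstm X Y) sndm). now rewrite pairing_fstm_sndm, id_l.
Qed.

Lemma det_swap (X Y : ob C) : deterministic (swap X Y).
Proof.
  rewrite <- (id_r (swap X Y)), <- pairing_fstm_sndm, swap_pairing.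
  apply det_pairing; [apply det_sndm | apply det_fstm].
Qed.

Lemma heq_del_tens (Y Z : ob C) : heq (del (tens Y Z)) (del Y ⊗ del Z).
Proof.
  rewrite (to_unit_unique (del (tens Y Z)) (cast (tens_unitl unit) ∘ (del Y ⊗ del Z))).
  apply heq_cast_l, heq_refl.
Qed.

Lemma fstm_assoc (X Y Z : ob C) :
  @fstm X (tens Y Z) ∘ cast (tens_assoc X Y Z) = @fstm X Y ∘ @fstm (tens X Y) Z.
Proof.
  apply heq_eq. unfold fstm.
  apply heq_trans with ((idm X ⊗ del Y) ⊗ del Z).
  { rewrite <- compA. apply heq_cast_l, heq_cast_r.
    apply heq_trans with (idm X ⊗ (del Y ⊗ del Z)).
    - apply heq_tens; [apply heq_refl | apply heq_del_tens].
    - apply heq_sym, heq_tens_assoc. }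
  apply heq_trans with (((idm X ⊗ del Y) ⊗ idm unit) ∘ (idm (tens X Y) ⊗ del Z)).
  { rewrite <- tens_interchange, id_l, id_r. apply heq_refl. }
  apply heq_sym, heq_comp; [apply heq_cast_l, heq_refl |].
  apply heq_cast_l, heq_sym, heq_tens_unitr.
Qed.

Lemma sndm_assoc (X Y Z : ob C) :
  @sndm X (tens Y Z) ∘ cast (tens_assoc X Y Z) = @sndm X Y ⊗ idm Z.
Proof.
  apply heq_eq. unfold sndm.
  apply heq_trans with ((del X ⊗ idm Y) ⊗ idm Z).
  { rewrite <- compA. apply heq_cast_l, heq_cast_r.
    rewrite <- tens_idm. apply heq_sym, heq_tens_assoc. }
  apply heq_sym, heq_tens; [apply heq_cast_l |]; apply heq_refl.
Qed.

Lemma fstm_assoc_inv (X Y Z : ob C) :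
  @fstm (tens X Y) Z ∘ cast (eq_sym (tens_assoc X Y Z)) = idm X ⊗ @fstm Y Z.
Proof.
  apply heq_eq. unfold fstm.
  apply heq_trans with (idm X ⊗ (idm Y ⊗ del Z)).
  { rewrite <- compA. apply heq_cast_l, heq_cast_r.
    rewrite <- tens_idm. apply heq_tens_assoc. }
  apply heq_sym, heq_tens; [| apply heq_cast_l]; apply heq_refl.
Qed.

Lemma sndm_assoc_inv (X Y Z : ob C) :
  @sndm (tens X Y) Z ∘ cast (eq_sym (tens_assoc X Y Z)) = @sndm Y Z ∘ @sndm X (tens Y Z).
Proof.
  apply heq_eq. unfold sndm.
  apply heq_trans with (del X ⊗ (del Y ⊗ idm Z)).
  { rewrite <- compA. apply heq_cast_l, heq_cast_r.
    apply heq_trans with ((del X ⊗ del Y) ⊗ idm Z).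
    - apply heq_tens; [apply heq_del_tens | apply heq_refl].
    - apply heq_tens_assoc. }
  apply heq_trans with ((idm unit ⊗ (del Y ⊗ idm Z)) ∘ (del X ⊗ idm (tens Y Z))).
  { rewrite <- tens_interchange, id_l, id_r. apply heq_refl. }
  apply heq_sym, heq_comp; [apply heq_cast_l, heq_refl |].
  apply heq_cast_l, heq_sym, heq_tens_unitl.
Qed.

Lemma assoc_copy_tens (H K : ob C) :
  cast (tens_assoc H H K) ∘ (copy H ⊗ idm K) = pairing (@fstm H K) (idm (tens H K)).
Proof.
  assert (D1 : deterministic (cast (tens_assoc H H K) ∘ (copy H ⊗ idm K))).
  { apply det_comp; [apply det_tens; [apply det_copy | apply det_idm] | apply det_cast]. }
  assert (D2 : deterministic (pairing (@fstm H K) (idm (tens H K)))).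
  { apply det_pairing; [apply det_fstm | apply det_idm]. }
  rewrite (pairing_ext_det _ D1), (pairing_ext_det _ D2). f_equal.
  - now rewrite fstm_pairing, compA, fstm_assoc, <- compA, fstm_tens, compA, fstm_copy, id_l.
  - now rewrite sndm_pairing, compA, sndm_assoc, <- tens_interchange, sndm_copy, id_l, tens_idm.
Qed.

Lemma pairing_idm_sndm (H K : ob C) :
  pairing (idm (tens H K)) (@sndm H K) = cast (eq_sym (tens_assoc H K K)) ∘ (idm H ⊗ copy K).
Proof.
  assert (D1 : deterministic (pairing (idm (tens H K)) (@sndm H K))).
  { apply det_pairing; [apply det_idm | apply det_sndm]. }
  assert (D2 : deterministic (cast (eq_sym (tens_assoc H K K)) ∘ (idm H ⊗ copy K))).
  { apply det_comp; [apply det_tens; [apply det_idm | apply det_copy] | apply det_cast]. }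
  rewrite (pairing_ext_det _ D1), (pairing_ext_det _ D2). f_equal.
  - now rewrite fstm_pairing, compA, fstm_assoc_inv, <- tens_interchange,
      fstm_copy, id_l, tens_idm.
  - now rewrite sndm_pairing, compA, sndm_assoc_inv, <- compA, sndm_tens, compA,
      sndm_copy, id_l.
Qed.

Lemma pairing_pairing_idm {K H : ob C} (g : hom K H) :
  pairing (pairing g (idm K)) (idm K) = pairing (idm (tens H K)) sndm ∘ pairing g (idm K).
Proof.
  rewrite pairing_idm_sndm, <- compA, tens_pairing, id_l, id_r, <- pairing_idm_idm.
  apply cast_move_l, assoc_pairing.
Qed.

Definition insr {H A : ob C} (x : hom unit A) : hom H (tens H A) :=
  (idm H ⊗ x) ∘ cast (eq_sym (tens_unitr H)).

Lemma det_insr {H A : ob C} (x : hom unit A) : deterministic x -> deterministic (@insr H A x).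
Proof.
  intros Hx. apply det_comp; [apply det_cast | apply det_tens; [apply det_idm | exact Hx]].
Qed.
Lemma fstm_insr {H A : ob C} (x : hom unit A) : fstm ∘ @insr H A x = idm H.
Proof.
  unfold insr. rewrite compA, fstm_tens, id_l. unfold fstm.
  now rewrite (to_unit_unique (del unit) (idm unit)), tens_idm, id_r, cast_comp, cast_idm.
Qed.
Lemma stens_insr {H K : ob C} (v : hom unit H) (o : hom unit K) : stens v o = insr o ∘ v.
Proof.
  unfold stens, insr.
  replace (v ⊗ o) with ((idm H ⊗ o) ∘ (v ⊗ idm unit))
    by now rewrite <- tens_interchange, id_l, id_r.
  rewrite <- !compA. f_equal. apply heq_eq.
  eapply heq_trans; [apply heq_cast_r, heq_tens_unitr |].
  apply heq_sym, heq_cast_l, heq_refl.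
Qed.
Lemma pairing_idm_state {A X : ob C} (g : hom A X) (x : hom unit A) :
  deterministic x -> pairing g (idm A) ∘ x = insr x ∘ (g ∘ x).
Proof.
  intros Hx. unfold pairing. unfold deterministic in Hx.
  rewrite <- compA, Hx, copy_unit, compA, <- tens_interchange, id_l.
  fold (stens (g ∘ x) x). apply stens_insr.
Qed.

Lemma condX_pairing {A X Y : ob C} (f : hom A (tens X Y)) (c : hom (tens X A) Y) :
  is_condX f c -> f = pairing fstm c ∘ pairing (margX f) (idm A).
Proof.
  unfold is_condX. intros Hc. rewrite Hc at 1.
  rewrite <- (compA (copy X ⊗ idm A) (cast (tens_assoc X X A)) (idm X ⊗ c)).
  now rewrite assoc_copy_tens, tens_pairing, id_l, id_r, <- compA.
Qed.

Lemma condX_eval {A X Y : ob C} (f : hom A (tens X Y)) (c : hom (tens X A) Y) (x : hom unit A) :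
  is_condX f c -> deterministic x ->
  f ∘ x = pairing (idm X) (c ∘ insr x) ∘ (margX f ∘ x).
Proof.
  intros Hc Hx. rewrite (condX_pairing f c Hc) at 1.
  rewrite <- compA, pairing_idm_state, compA, pairing_det, fstm_insr by auto using det_insr.
  reflexivity.
Qed.

Lemma margX_swap {A X Y : ob C} (f : hom A (tens X Y)) : margX (swap X Y ∘ f) = margY f.
Proof. unfold margX, margY. now rewrite compA, fstm_swap. Qed.

Lemma condY_state_swap {X K : ob C} (psi : hom unit (tens X K)) (c : hom (tens K unit) X) :
  is_condY psi c ->
  swap X K ∘ psi = pairing (idm K) (c ∘ cast (eq_sym (tens_unitr K))) ∘ margY psi.
Proof.
  intros Hc. pose proof (condX_eval _ _ (idm unit) Hc (det_idm _)) as E.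
  rewrite !id_r, margX_swap in E. rewrite E. unfold insr. now rewrite tens_idm, id_l.
Qed.

Lemma condY_state {X K : ob C} (psi : hom unit (tens X K)) (c : hom (tens K unit) X) :
  is_condY psi c ->
  psi = pairing (c ∘ cast (eq_sym (tens_unitr K))) (idm K) ∘ margY psi.
Proof.
  intros Hc. transitivity (swap K X ∘ (swap X K ∘ psi)).
  - now rewrite compA, swap_swap, id_l.
  - now rewrite (condY_state_swap psi c Hc), compA, swap_pairing.
Qed.

Lemma condY_pairing {K Y H : ob C} (a : hom K (tens Y H)) (e : hom (tens H K) Y) :
  is_condY a e -> swap Y H ∘ a = pairing fstm e ∘ pairing (sndm ∘ a) (idm K).
Proof. intros Hc. rewrite (condX_pairing _ _ Hc) at 1. now rewrite margX_swap. Qed.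

Lemma as_eq_comp {X Y : ob C} (mu : hom unit X) (a b : hom X Y) :
  as_eq mu a b -> a ∘ mu = b ∘ mu.
Proof.
  unfold as_eq. intros E.
  now rewrite <- (sndm_pairing (idm X) a), <- (sndm_pairing (idm X) b), <- !compA, E.
Qed.

Lemma pairing_idm_det {A B Z : ob C} (h : hom A B) (F : hom B Z) :
  deterministic h -> pairing (idm B) F ∘ h = (h ⊗ idm Z) ∘ pairing (idm A) (F ∘ h).
Proof. intros Hh. now rewrite pairing_det, tens_pairing, id_l, id_r, id_l. Qed.

Lemma as_eq_det_retract {A B Z : ob C} (h : hom A B) (h' : hom B A) (mu : hom unit A)
  (F G : hom B Z) :
  deterministic h -> h' ∘ h = idm A ->
  as_eq (h ∘ mu) F G <-> as_eq mu (F ∘ h) (G ∘ h).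
Proof.
  intros Hh Hh'. unfold as_eq. rewrite !compA, !pairing_idm_det by exact Hh.
  split; intros E.
  - apply (f_equal (fun k => (h' ⊗ idm Z) ∘ k)) in E.
    now rewrite <- !compA, !(compA _ (h ⊗ idm Z)), <- !tens_interchange, Hh', id_l, tens_idm,
      !id_l in E.
  - now rewrite <- !compA, E.
Qed.

Lemma abs_cont_det_retract {A B : ob C} (h : hom A B) (h' : hom B A) (a b : hom unit A) :
  deterministic h -> h' ∘ h = idm A -> abs_cont a b -> abs_cont (h ∘ a) (h ∘ b).
Proof.
  intros Hh Hh' Hab Z F G. rewrite !(as_eq_det_retract h h') by assumption. apply Hab.
Qed.

Lemma abs_cont_swap {P Q : ob C} (a b : hom unit (tens P Q)) :
  abs_cont (swap P Q ∘ a) (swap P Q ∘ b) <-> abs_cont a b.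
Proof.
  split; [| apply abs_cont_det_retract with (swap Q P); auto using det_swap, swap_swap].
  intros Hab. rewrite <- (id_l a), <- (id_l b), <- (swap_swap P Q), <- !compA.
  apply abs_cont_det_retract with (swap P Q); auto using det_swap, swap_swap.
Qed.

Lemma swap_stens {P Q : ob C} (x : hom unit P) (y : hom unit Q) :
  swap P Q ∘ stens x y = stens y x.
Proof. unfold stens. now rewrite compA, swap_natural, swap_unit_unit, id_r. Qed.

Lemma posterior_unique {X : ob C} (s : ObsHom unit X) (c1 c2 : hom (tens (okey s) unit) X) :
  succeeds s -> is_condY (omap s) c1 -> is_condY (omap s) c2 ->
  posterior s c1 = posterior s c2.
Proof.
  intros Hs H1 H2. unfold posterior. apply as_eq_comp, Hs. unfold as_eq.
  now rewrite <- (condY_state_swap _ _ H1), <- (condY_state_swap _ _ H2).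
Qed.

Lemma obs_sim_refl {X : ob C} (s : ObsHom unit X) : obs_sim s s.
Proof.
  destruct (classic (succeeds s)) as [S | S]; [left | right]; auto.
  repeat split; auto. intros c c' Hc Hc'. now apply posterior_unique.
Qed.

Lemma obs_sim_sym {X : ob C} (s t : ObsHom unit X) : obs_sim s t -> obs_sim t s.
Proof.
  intros [[Ss [St P]] | [Ss St]]; [left | right]; auto.
  repeat split; auto. intros c c' Hc Hc'. symmetry. now apply P.
Qed.

Lemma obs_sim_trans (Hcond : has_conditionals C) {X : ob C} (s t u : ObsHom unit X) :
  obs_sim s t -> obs_sim t u -> obs_sim s u.
Proof.
  intros [[Ss [St P1]] | [Ss St]] [[St' [Su P2]] | [St' Su]]; try contradiction.
  - left. repeat split; auto. intros c c'' H1 H3.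
    destruct (proj2 Hcond unit X (okey t) (omap t)) as [ct Hct].
    rewrite (P1 c ct H1 Hct). now apply P2.
  - now right.
Qed.

Lemma margY_obs_comp {X Y H K : ob C} (psi : hom unit (tens X K)) (f : hom X (tens Y H))
  (c' : hom K X) (mu : hom unit K) :
  psi = pairing c' (idm K) ∘ mu ->
  margY (cast (tens_assoc Y H K) ∘ (f ⊗ idm K) ∘ psi)
  = pairing (margY (f ∘ c')) (idm K) ∘ mu.
Proof.
  intros ->. unfold margY at 1. fold (@sndm Y (tens H K)).
  rewrite !compA, sndm_assoc, <- tens_interchange, id_l, tens_pairing, id_l.
  unfold margY. now rewrite compA.
Qed.

(* Read with [margY_obs_comp]: e is a conditional of the composite problem with
   respect to H ⊗ K. *)
Lemma swap_obs_comp {X Y H K : ob C} (psi : hom unit (tens X K)) (f : hom X (tens Y H))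
  (c' : hom K X) (mu : hom unit K) (e : hom (tens H K) Y) :
  psi = pairing c' (idm K) ∘ mu -> is_condY (f ∘ c') e ->
  swap Y (tens H K) ∘ (cast (tens_assoc Y H K) ∘ (f ⊗ idm K) ∘ psi)
  = pairing (idm (tens H K)) e ∘ (pairing (margY (f ∘ c')) (idm K) ∘ mu).
Proof.
  intros -> He.
  assert (Ea : f ∘ c' = pairing e fstm ∘ pairing (margY (f ∘ c')) (idm K)).
  { transitivity (swap H Y ∘ (swap Y H ∘ (f ∘ c'))).
    - now rewrite compA, swap_swap, id_l.
    - now rewrite (condY_pairing _ _ He), compA, swap_pairing. }
  rewrite (compA mu), <- (compA _ (f ⊗ idm K)), tens_pairing, id_l, Ea at 1.
  rewrite <- (id_l (idm K)) at 2. rewrite <- tens_pairing, pairing_pairing_idm.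
  rewrite !compA, <- (compA _ (pairing e fstm ⊗ idm K)), tens_pairing, id_l, id_r,
    <- (compA _ (cast (tens_assoc Y H K))), assoc_pairing, pairing_fstm_sndm, swap_pairing.
  now rewrite <- compA.
Qed.

Definition obs_push {X Y : ob C} (m : ObsHom X Y) (x : hom unit X) : ObsHom unit Y :=
  {| okey := okey m; omap := omap m ∘ x; oobs := oobs m |}.

Lemma succeeds_obs_comp (Hps : precise_supports C) {X Y : ob C}
  (s : ObsHom unit X) (m : ObsHom X Y) (c : hom (tens (okey s) unit) X) :
  obs_valid s -> obs_valid m -> is_condY (omap s) c ->
  succeeds (obs_comp m s) <-> succeeds s /\ succeeds (obs_push m (posterior s c)).
Proof.
  destruct s as [K psi o], m as [H f v]. unfold obs_valid, succeeds, posterior. cbn.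
  intros Ho Hv Hc.
  rewrite (margY_obs_comp psi f _ _ (condY_state psi c Hc)), <- swap_stens,
    <- (swap_pairing (idm K)), <- (compA (margY psi)), abs_cont_swap, (Hps _ _ o v _ _ Ho Hv).
  unfold margY. now rewrite !compA.
Qed.

Lemma posterior_obs_comp (Hcond : has_conditionals C) {X Y : ob C}
  (s : ObsHom unit X) (m : ObsHom X Y) (c : hom (tens (okey s) unit) X)
  (Cc : hom (tens (okey (obs_comp m s)) unit) Y)
  (ep : hom (tens (okey m) unit) Y) :
  obs_valid s -> is_condY (omap s) c -> is_condY (omap (obs_comp m s)) Cc ->
  is_condY (omap (obs_push m (posterior s c))) ep ->
  succeeds (obs_comp m s) -> succeeds (obs_push m (posterior s c)) ->
  posterior (obs_comp m s) Cc = posterior (obs_push m (posterior s c)) ep.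
Proof.
  revert c Cc ep. destruct s as [K psi o], m as [H f v].
  unfold obs_valid, succeeds, posterior. cbn.
  intros c Cc ep Ho Hc HCc Hep Hsucc Hsucc_push.
  pose proof (condY_state psi c Hc) as Epsi.
  set (c' := c ∘ cast (eq_sym (tens_unitr K))) in *.
  destruct (proj2 Hcond K Y H (f ∘ c')) as [e He].
  assert (Ecomp : as_eq (margY (cast (tens_assoc Y H K) ∘ (f ⊗ idm K) ∘ psi))
                    (Cc ∘ cast (eq_sym (tens_unitr (tens H K)))) e).
  { unfold as_eq. rewrite <- (condY_state_swap _ _ HCc), (margY_obs_comp _ _ _ _ Epsi).
    exact (swap_obs_comp _ _ _ _ _ Epsi He). }
  assert (Epush : as_eq (margY (f ∘ (c' ∘ o)))
                    (e ∘ insr o) (ep ∘ cast (eq_sym (tens_unitr H)))).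
  { unfold as_eq. rewrite <- (condY_state_swap _ _ Hep).
    unfold is_condY in He. rewrite (compA o c' f), (compA o (f ∘ c') (swap Y H)).
    rewrite (condX_eval _ _ o He Ho), margX_swap. unfold margY. now rewrite !compA. }
  rewrite (as_eq_comp _ _ _ (Hsucc _ _ _ Ecomp)), stens_insr, compA.
  exact (as_eq_comp _ _ _ (Hsucc_push _ _ _ Epush)).
Qed.

Lemma obs_sim_obs_comp_push (Hcond : has_conditionals C) (Hps : precise_supports C)
  {X Y : ob C} (s : ObsHom unit X) (m : ObsHom X Y) (c : hom (tens (okey s) unit) X) :
  obs_valid s -> obs_valid m -> is_condY (omap s) c -> succeeds s ->
  obs_sim (obs_comp m s) (obs_push m (posterior s c)).
Proof.
  intros Hs Hm Hc Ss. pose proof (succeeds_obs_comp Hps s m c Hs Hm Hc) as Scomp.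
  destruct (classic (succeeds (obs_push m (posterior s c)))) as [Sp | Sp].
  - left. repeat split; [now apply Scomp | exact Sp |].
    intros Cc ep HCc Hep. apply posterior_obs_comp; auto. now apply Scomp.
  - right. split; [intros Sc; apply Sp, Scomp, Sc | exact Sp].
Qed.

Lemma obs_sim_obs_comp (Hcond : has_conditionals C) (Hps : precise_supports C)
  {X Y : ob C} (s t : ObsHom unit X) (m : ObsHom X Y) :
  obs_valid s -> obs_valid t -> obs_valid m ->
  obs_sim s t -> obs_sim (obs_comp m s) (obs_comp m t).
Proof.
  intros Hs Ht Hm Hst.
  destruct (proj2 Hcond unit X (okey s) (omap s)) as [cs Hcs].
  destruct (proj2 Hcond unit X (okey t) (omap t)) as [ct Hct].
  destruct Hst as [[Ss [St P]] | [Ss St]].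
  - apply obs_sim_trans with (obs_push m (posterior s cs)); [exact Hcond | |].
    + now apply obs_sim_obs_comp_push.
    + rewrite (P cs ct Hcs Hct). apply obs_sim_sym. now apply obs_sim_obs_comp_push.
  - right. split; intros Sc; [apply Ss | apply St];
      eapply succeeds_obs_comp; eauto.
Qed.

End Markov.

Theorem theorem5p7 (C : MarkovData) (HC : MarkovAxioms C)
  (Hcond : has_conditionals C) (Hps : precise_supports C) :
  (forall (X : ob C) (s : ObsHom unit X), obs_valid s -> obs_sim s s) /\
  (forall (X : ob C) (s t : ObsHom unit X),
      obs_valid s -> obs_valid t -> obs_sim s t -> obs_sim t s) /\
  (forall (X : ob C) (s t u : ObsHom unit X),
      obs_valid s -> obs_valid t -> obs_valid u ->
      obs_sim s t -> obs_sim t u -> obs_sim s u) /\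
  (forall (X Y : ob C) (s t : ObsHom unit X) (m : ObsHom X Y),
      obs_valid s -> obs_valid t -> obs_valid m ->
      obs_sim s t -> obs_sim (obs_comp m s) (obs_comp m t)).
Proof.
  split; [| split; [| split]].
  - intros X s _. exact (obs_sim_refl HC s).
  - intros X s t _ _. apply obs_sim_sym.
  - intros X s t u _ _ _. exact (obs_sim_trans Hcond s t u).
  - intros X Y s t m. exact (obs_sim_obs_comp HC Hcond Hps s t m).
Qed.
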